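(* Let $E$ be a $K$-contact Lie algebroid with structure $(F_E,\xi,\eta,g_E)$, fundamental form $\Omega_E$, and Levi-Civita connection $\nabla$ of $g_E$. Then for all $s,s_1,s_2\in\Gamma(E)$: $$(\nabla_{s_1}\eta)s_2=g_E(\nabla_{s_1}\xi,s_2)=\Omega_E(s_1,s_2),\qquad (\nabla_sF_E)\xi=-s+\eta(s)\xi.$$
   Context: A Lie algebroid $(E,\rho_E,[\cdot,\cdot]_E)$ over $M$ is a vector bundle with anchor $\rho_E:E\to TM$ and Lie bracket on $\Gamma(E)$ with $[s_1,fs_2]_E=f[s_1,s_2]_E+\rho_E(s_1)(f)s_2$. For a 1-form $\eta$, $(d_E\eta)(s_1,s_2)=\frac12\{\rho_E(s_1)(\eta(s_2))-\rho_E(s_2)(\eta(s_1))-\eta([s_1,s_2]_E)\}$. For $E$ of rank $2m+1$, an almost contact Riemannian structure $(F_E,\xi,\eta,g_E)$: endomorphism $F_E$, $\xi\in\Gamma(E)$, $\eta\in\Gamma(E^* )$, bundle metric $g_E$ with $F_E^2=-I_E+\eta\otimes\xi$, $\eta(\xi)=1$, $g_E(F_Es_1,F_Es_2)=g_E(s_1,s_2)-\eta(s_1)\eta(s_2)$; fundamental form $\Omega_E(s_1,s_2)=g_E(s_1,F_Es_2)$. $E$ is contact Riemannian if also $\eta\wedge(d_E\eta)^m$ vanishes nowhere and $d_E\eta=\Omega_E$; it is $K$-contact if moreover $\xi$ is Killing: $\rho_E(\xi)(g_E(s_1,s_2))-g_E([\xi,s_1]_E,s_2)-g_E(s_1,[\xi,s_2]_E)=0$.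 The Levi-Civita connection $\nabla$ is the unique torsion-free metric $E$-connection ($\nabla_{s_1}s_2-\nabla_{s_2}s_1=[s_1,s_2]_E$, $\rho_E(s)(g_E(s_1,s_2))=g_E(\nabla_ss_1,s_2)+g_E(s_1,\nabla_ss_2)$); $(\nabla_{s_1}\eta)(s_2)=\rho_E(s_1)(\eta(s_2))-\eta(\nabla_{s_1}s_2)$ and $(\nabla_sF_E)s'=\nabla_s(F_Es')-F_E(\nabla_ss')$. *)

(* Algebraic (Lie--Rinehart) model of a Lie algebroid:
   A  = the commutative R-algebra of functions C^oo(M),
   S  = the A-module of sections Gamma(E). *)
From HB Require Import structures.
From mathcomp Require Import all_boot all_order all_algebra.
Set Implicit Arguments. Unset Strict Implicit. Unset Printing Implicit Defensive.
Import Order.TTheory GRing.Theory Num.Theory.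
Local Open Scope ring_scope.

Section LieAlgebroid.
Variables (R : realFieldType) (A : comAlgType R) (S : lmodType A).

(* the function algebra has no nonzero nilpotents of order 2 (true for C^oo(M)) *)
Definition reduced_alg : Prop := forall a : A, a * a = 0 -> a = 0.

Definition is_lie_algebroid (anchor : S -> A -> A) (br : S -> S -> S) : Prop :=
      (forall (f : A) (s t : S) (a : A),
          anchor (f *: s + t) a = f * anchor s a + anchor t a) /\
      (forall (s : S) (r : R) (a b : A),
          anchor s (r%:A * a + b) = r%:A * anchor s a + anchor s b) /\
      (forall (s : S) (a b : A),
          anchor s (a * b) = anchor s a * b + a * anchor s b) /\
      (forall (r : R) (s1 s2 t : S),
          br (r%:A *: s1 + s2) t = r%:A *: br s1 t + br s2 t) /\
      (forall s t : S, br s t = - br t s) /\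
      (forall s1 s2 s3 : S,
          br s1 (br s2 s3) + br s2 (br s3 s1) + br s3 (br s1 s2) = 0) /\
      (forall (s1 s2 : S) (f : A),
          br s1 (f *: s2) = f *: br s1 s2 + anchor s1 f *: s2) /\
      (forall (s t : S) (a : A),
          anchor (br s t) a = anchor s (anchor t a) - anchor t (anchor s a)).

(* exterior derivative of a 1-form, with the paper's 1/2 convention *)
Definition dE (anchor : S -> A -> A) (br : S -> S -> S) (eta : S -> A)
    (s1 s2 : S) : A :=
  (2^-1 : R)%:A * (anchor s1 (eta s2) - anchor s2 (eta s1) - eta (br s1 s2)).

Definition is_bundle_metric (g : S -> S -> A) : Prop :=
  [/\ (forall s t : S, g s t = g t s),
      (forall (f : A) (s1 s2 t : S), g (f *: s1 + s2) t = f * g s1 t + g s2 t) &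
      (forall s : S, (forall t : S, g s t = 0) -> s = 0)].

Definition is_almost_contact_riemannian (F : S -> S) (xi : S) (eta : S -> A)
    (g : S -> S -> A) : Prop :=
  (forall (f : A) (s t : S), F (f *: s + t) = f *: F s + F t) /\
      (forall (f : A) (s t : S), eta (f *: s + t) = f * eta s + eta t) /\
      is_bundle_metric g /\
      (forall s : S, F (F s) = - s + eta s *: xi) /\
      eta xi = 1 /\
      (forall s1 s2 : S, g (F s1) (F s2) = g s1 s2 - eta s1 * eta s2).

Definition OmegaE (F : S -> S) (g : S -> S -> A) (s1 s2 : S) : A := g s1 (F s2).

(* K-contact: contact (d_E eta = Omega_E) and xi Killing. *)
Definition is_K_contact (anchor : S -> A -> A) (br : S -> S -> S)
    (F : S -> S) (xi : S) (eta : S -> A) (g : S -> S -> A) : Prop :=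
  [/\ is_almost_contact_riemannian F xi eta g,
      (forall s1 s2 : S, dE anchor br eta s1 s2 = OmegaE F g s1 s2) &
      (forall s1 s2 : S,
          anchor xi (g s1 s2) - g (br xi s1) s2 - g s1 (br xi s2) = 0)].

Definition is_levi_civita (anchor : S -> A -> A) (br : S -> S -> S)
    (g : S -> S -> A) (nabla : S -> S -> S) : Prop :=
  [/\ (forall (f : A) (s1 s2 t : S),
          nabla (f *: s1 + s2) t = f *: nabla s1 t + nabla s2 t),
      (forall (s t1 t2 : S), nabla s (t1 + t2) = nabla s t1 + nabla s t2),
      (forall (s t : S) (f : A),
          nabla s (f *: t) = f *: nabla s t + anchor s f *: t),
      (forall s1 s2 : S, nabla s1 s2 - nabla s2 s1 = br s1 s2) &
      (forall s s1 s2 : S,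
          anchor s (g s1 s2) = g (nabla s s1) s2 + g s1 (nabla s s2))].

Definition nabla_eta (anchor : S -> A -> A) (nabla : S -> S -> S)
    (eta : S -> A) (s1 s2 : S) : A :=
  anchor s1 (eta s2) - eta (nabla s1 s2).

Definition nabla_F (nabla : S -> S -> S) (F : S -> S) (s s' : S) : S :=
  nabla s (F s') - F (nabla s s').

End LieAlgebroid.

(* F^2 = - 1 + eta (x) xi forces F xi = 0 (using that A has no square-zero
   elements), hence g (s, xi) = eta s and F is g-skew. Metric compatibility
   turns (nabla_{s1} eta) s2 into g (nabla_{s1} xi) s2; with torsion-freeness,
   the Killing equation for xi says that this form is skew, so it equals
   d_E eta = Omega_E. Nondegeneracy of g and skewness of F then give
   nabla_s xi = - F s, whence (nabla_s F) xi = - F (nabla_s xi) = F^2 s. *)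
From mathcomp Require Import all_boot all_algebra.
From mathcomp Require Import ring.
Set Implicit Arguments. Unset Strict Implicit.
Import GRing.Theory Num.Theory.
Local Open Scope ring_scope.

Section AdditiveMaps.
Variables (U V : zmodType) (f : U -> V).
Hypothesis fD : forall x y, f (x + y) = f x + f y.

Lemma additive_map0 : f 0 = 0.
Proof. by apply: (addrI (f 0)); rewrite -fD !addr0. Qed.

Lemma additive_mapN x : f (- x) = - f x.
Proof. by apply: (addrI (f x)); rewrite -fD !subrr additive_map0. Qed.

Lemma additive_mapB x y : f (x - y) = f x - f y.
Proof. by rewrite fD additive_mapN. Qed.

End AdditiveMaps.

Section ModuleMaps.
Variables (R : realFieldType) (A : comAlgType R) (S : lmodType A).

Lemma scalar_linearD (f : S -> A) :
  (forall (a : A) (s t : S), f (a *: s + t) = a * f s + f t) ->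
  forall s t, f (s + t) = f s + f t.
Proof. by move=> flin s t; rewrite -[s in LHS]scale1r flin mul1r. Qed.

Lemma scalar_linearZ (f : S -> A) :
  (forall (a : A) (s t : S), f (a *: s + t) = a * f s + f t) ->
  forall a s, f (a *: s) = a * f s.
Proof.
move=> flin a s; have f0 := additive_map0 (scalar_linearD flin).
by rewrite -[a *: s]addr0 flin f0 addr0.
Qed.

Lemma endo_linearD (F : S -> S) :
  (forall (a : A) (s t : S), F (a *: s + t) = a *: F s + F t) ->
  forall s t, F (s + t) = F s + F t.
Proof. by move=> Flin s t; rewrite -[s in LHS]scale1r Flin scale1r. Qed.

Lemma endo_linearZ (F : S -> S) :
  (forall (a : A) (s t : S), F (a *: s + t) = a *: F s + F t) ->
  forall a s, F (a *: s) = a *: F s.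
Proof.
move=> Flin a s; have F0 := additive_map0 (endo_linearD Flin).
by rewrite -[a *: s]addr0 Flin F0 addr0.
Qed.

End ModuleMaps.

Section BundleMetric.
Variables (R : realFieldType) (A : comAlgType R) (S : lmodType A).
Variable g : S -> S -> A.
Hypothesis gE : is_bundle_metric g.

Lemma metricC s t : g s t = g t s.
Proof. by case: gE. Qed.

Lemma metricDl t s1 s2 : g (s1 + s2) t = g s1 t + g s2 t.
Proof.
by case: gE => _ glin _; apply: (scalar_linearD (f := g^~ t)) => a ? ?; apply: glin.
Qed.

Lemma metricZl a s t : g (a *: s) t = a * g s t.
Proof.
by case: gE => _ glin _; apply: (scalar_linearZ (f := g^~ t)) => ? ? ?; apply: glin.
Qed.

Lemma metricDr t s1 s2 : g t (s1 + s2) = g t s1 + g t s2.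
Proof. by rewrite metricC metricDl !(metricC t). Qed.

Lemma metricZr a s t : g t (a *: s) = a * g t s.
Proof. by rewrite metricC metricZl metricC. Qed.

Lemma metric0r t : g t 0 = 0.
Proof. exact: (additive_map0 (f := g t) (metricDr t)). Qed.

Lemma metricNr t s : g t (- s) = - g t s.
Proof. exact: (additive_mapN (f := g t) (metricDr t)). Qed.

Lemma metricNl t s : g (- s) t = - g s t.
Proof. by rewrite metricC metricNr metricC. Qed.

Lemma metricBl t s1 s2 : g (s1 - s2) t = g s1 t - g s2 t.
Proof. exact: (additive_mapB (f := g^~ t) (metricDl t)). Qed.

Lemma metricBr t s1 s2 : g t (s1 - s2) = g t s1 - g t s2.
Proof. exact: (additive_mapB (f := g t) (metricDr t)). Qed.

Lemma metric_injl s1 s2 : (forall t, g s1 t = g s2 t) -> s1 = s2.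
Proof.
case: gE => _ _ gnd eq12; apply/eqP; rewrite -subr_eq0; apply/eqP.
by apply: gnd => t; rewrite metricBl eq12 subrr.
Qed.

End BundleMetric.

Section AlmostContactRiemannian.
Variables (R : realFieldType) (A : comAlgType R) (S : lmodType A).
Variables (F : S -> S) (xi : S) (eta : S -> A) (g : S -> S -> A).
Hypothesis reducedA : reduced_alg A.
Hypothesis acr : is_almost_contact_riemannian F xi eta g.

Let Flin := acr.1.
Let etalin := acr.2.1.
Let gE := acr.2.2.1.
Let FF : forall s, F (F s) = - s + eta s *: xi := acr.2.2.2.1.
Let eta_xi : eta xi = 1 := acr.2.2.2.2.1.
Let gFF : forall s1 s2, g (F s1) (F s2) = g s1 s2 - eta s1 * eta s2
  := acr.2.2.2.2.2.

Let FD := endo_linearD Flin.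
Let FZ := endo_linearZ Flin.
Let etaZ := scalar_linearZ etalin.
Let eta0 := additive_map0 (scalar_linearD etalin).

(* Apply F to F^2 s = - s + eta s xi and compare with F^2 (F s). *)
Lemma eta_F_reeb s : eta (F s) *: xi = eta s *: F xi.
Proof.
apply: (addrI (- F s)).
by have := congr1 F (FF s); rewrite [F (F (F s))]FF FD (additive_mapN FD) FZ.
Qed.

(* F xi = c xi with c = eta (F xi), so F^2 xi = c^2 xi = 0 forces c^2 = 0. *)
Lemma F_reeb : F xi = 0.
Proof.
have Fxi := eta_F_reeb xi; rewrite eta_xi scale1r in Fxi.
have cFxi0 : eta (F xi) *: F xi = 0 by rewrite -FZ Fxi FF eta_xi scale1r addNr.
have c2 : eta (F xi) * eta (F xi) = 0.
  by have := congr1 eta cFxi0; rewrite -{1}Fxi !etaZ eta_xi mulr1 eta0.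
by rewrite -Fxi (reducedA c2) scale0r.
Qed.

Lemma eta_F s : eta (F s) = 0.
Proof.
have := congr1 eta (eta_F_reeb s).
by rewrite F_reeb scaler0 eta0 etaZ eta_xi mulr1.
Qed.

Lemma metric_reeb s : g s xi = eta s.
Proof.
have := gFF s xi; rewrite F_reeb metric0r // eta_xi mulr1.
by move/eqP; rewrite eq_sym subr_eq0 => /eqP.
Qed.

Lemma metric_F_skew s1 s2 : g s1 (F s2) = - g (F s1) s2.
Proof.
have := gFF s1 (F s2); rewrite eta_F mulr0 subr0 => <-.
by rewrite FF metricDr // metricZr // metricNr // metric_reeb eta_F mulr0 addr0.
Qed.

End AlmostContactRiemannian.

Section LeviCivitaReeb.
Variables (R : realFieldType) (A : comAlgType R) (S : lmodType A).
Variables (anchor : S -> A -> A) (br : S -> S -> S).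
Variables (g : S -> S -> A) (nabla : S -> S -> S) (xi : S) (eta : S -> A).
Hypothesis gE : is_bundle_metric g.
Hypothesis lc : is_levi_civita anchor br g nabla.
Hypothesis metric_reeb : forall s, g s xi = eta s.
Hypothesis etaD : forall s t, eta (s + t) = eta s + eta t.
Hypothesis xi_killing :
  forall s1 s2, anchor xi (g s1 s2) - g (br xi s1) s2 - g s1 (br xi s2) = 0.

Let torsion_free : forall s1 s2, nabla s1 s2 - nabla s2 s1 = br s1 s2.
Proof. by case: lc. Qed.

Let metric_compatible :
  forall s s1 s2, anchor s (g s1 s2) = g (nabla s s1) s2 + g s1 (nabla s s2).
Proof. by case: lc. Qed.

Lemma nabla_eta_reeb s1 s2 :
  nabla_eta anchor nabla eta s1 s2 = g (nabla s1 xi) s2.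
Proof.
rewrite /nabla_eta -!metric_reeb (metricC gE s2) (metricC gE (nabla _ _)).
by rewrite metric_compatible addrK.
Qed.

Lemma killing_nabla_reeb_skew s1 s2 :
  g (nabla s1 xi) s2 + g s1 (nabla s2 xi) = 0.
Proof.
have := xi_killing s1 s2.
rewrite metric_compatible -!torsion_free metricBl // metricBr // => <-; ring.
Qed.

Lemma dE_killing_reeb s1 s2 : dE anchor br eta s1 s2 = g (nabla s1 xi) s2.
Proof.
have half (a : A) : a = (2^-1 : R)%:A * a *+ 2.
  by rewrite -mulrnAr mulr_algl -scaler_nat scalerA mulVf ?pnatr_eq0 ?scale1r.
have nabla2 : g (nabla s1 xi) s2 - g (nabla s2 xi) s1 = g (nabla s1 xi) s2 *+ 2.
  rewrite (metricC gE _ s1) -[RHS]subr0 -(killing_nabla_reeb_skew s1 s2).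
  by ring.
rewrite [RHS]half -mulrnAr -nabla2 -!nabla_eta_reeb /dE /nabla_eta.
by rewrite -torsion_free (additive_mapB etaD); congr (_ * _); ring.
Qed.

End LeviCivitaReeb.

Section KContactLeviCivita.
Variables (R : realFieldType) (A : comAlgType R) (S : lmodType A).
Variables (anchor : S -> A -> A) (br : S -> S -> S).
Variables (F : S -> S) (xi : S) (eta : S -> A) (g : S -> S -> A).
Variable nabla : S -> S -> S.
Hypothesis reducedA : reduced_alg A.
Hypothesis kc : is_K_contact anchor br F xi eta g.
Hypothesis lc : is_levi_civita anchor br g nabla.

Let acr : is_almost_contact_riemannian F xi eta g.
Proof. by case: kc. Qed.

Let gE : is_bundle_metric g := acr.2.2.1.

Lemma nabla_eta_K_contact s1 s2 :
  nabla_eta anchor nabla eta s1 s2 = g (nabla s1 xi) s2.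
Proof. exact: (nabla_eta_reeb gE lc (metric_reeb reducedA acr)). Qed.

Lemma nabla_reeb_OmegaE s1 s2 : g (nabla s1 xi) s2 = OmegaE F g s1 s2.
Proof.
case: kc => _ contact killing; rewrite -contact.
have etaD := scalar_linearD acr.2.1.
by rewrite (dE_killing_reeb gE lc (metric_reeb reducedA acr) etaD killing).
Qed.

Lemma nabla_reeb s : nabla s xi = - F s.
Proof.
apply: (metric_injl gE) => t.
by rewrite nabla_reeb_OmegaE /OmegaE (metric_F_skew reducedA acr) metricNl.
Qed.

Lemma nabla_F_reeb s : nabla_F nabla F s xi = - s + eta s *: xi.
Proof.
have [_ nablaD _ _ _] := lc; have [Flin [_ [_ [FF _]]]] := acr.
rewrite /nabla_F (F_reeb reducedA acr) (additive_map0 (nablaD s)) nabla_reeb.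
by rewrite (additive_mapN (endo_linearD Flin)) FF sub0r opprK.
Qed.

End KContactLeviCivita.

Theorem proposition4p7 (R : realFieldType) (A : comAlgType R) (S : lmodType A)
    (anchor : S -> A -> A) (br : S -> S -> S)
    (F : S -> S) (xi : S) (eta : S -> A) (g : S -> S -> A)
    (nabla : S -> S -> S) :
  reduced_alg A ->
  is_lie_algebroid anchor br ->
  is_K_contact anchor br F xi eta g ->
  is_levi_civita anchor br g nabla ->
  forall s s1 s2 : S,
    [/\ nabla_eta anchor nabla eta s1 s2 = g (nabla s1 xi) s2,
        g (nabla s1 xi) s2 = OmegaE F g s1 s2 &
        nabla_F nabla F s xi = - s + eta s *: xi].
Proof.
move=> reducedA _ kc lc s s1 s2; split.
- exact: (nabla_eta_K_contact reducedA kc lc).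
- exact: (nabla_reeb_OmegaE reducedA kc lc).
- exact: (nabla_F_reeb reducedA kc lc).
Qed.
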